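(* For every poset $(S,\le)$, the free $\mathbb{B}$-module $\mathbb{B}(S,\le)$ is flat.
   Context: $\mathbb{B}=\{-\infty,0\}$ is the Boolean semifield (idempotent semiring with $\vee=\max$); $\mathbb{B}$-modules are join-semilattices with least element. $\mathbb{B}(S,\le)$ is the set of lower subsets of $S$ which are downward closures of finite subsets, under union. A $\mathbb{B}$-module $M$ is flat if the functor $-\otimes_{\mathbb{B}}M$ is exact (preserves finite limits and finite colimits). *)

From Stdlib Require Import List ClassicalEpsilon FunctionalExtensionality
  PropExtensionality ProofIrrelevance.
Import ListNotations.
Set Implicit Arguments.

(* A B-module, B = {-oo,0} the Boolean semifield: the scalar action is forced
   (0.x = x, (-oo).x = bottom), so a B-module is exactly a join-semilattice
   with least element, i.e. a commutative idempotent monoid (M, \/, bot). *)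
Record BMod : Type := {
  bcar :> Type;
  bjoin : bcar -> bcar -> bcar;
  bzero : bcar;
  bjoinA : forall x y z, bjoin x (bjoin y z) = bjoin (bjoin x y) z;
  bjoinC : forall x y, bjoin x y = bjoin y x;
  bjoinI : forall x, bjoin x x = x;
  bjoin0 : forall x, bjoin bzero x = x }.
Arguments bjoin {b} _ _.
Arguments bzero {b}.

Record hom (A B : BMod) := {
  hfun :> A -> B;
  hom_join : forall x y, hfun (bjoin x y) = bjoin (hfun x) (hfun y);
  hom_zero : hfun bzero = bzero }.

Definition hcomp (A B C : BMod) (g : hom B C) (f : hom A B) : hom A C.
Proof.
  refine (@Build_hom A C (fun x => g (f x)) _ _).
  - intros x y; rewrite !hom_join; reflexivity.
  - rewrite !hom_zero; reflexivity.
Defined.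

Definition heq (A B : BMod) (f g : hom A B) : Prop := forall x, f x = g x.

Definition is_terminal (T : BMod) : Prop :=
  forall X : BMod, inhabited (hom X T) /\ forall f g : hom X T, heq f g.

Definition is_initial (I : BMod) : Prop :=
  forall X : BMod, inhabited (hom I X) /\ forall f g : hom I X, heq f g.

Definition is_product (A B P : BMod) (p1 : hom P A) (p2 : hom P B) : Prop :=
  (forall (X : BMod) (f : hom X A) (g : hom X B),
      exists h : hom X P, heq (hcomp p1 h) f /\ heq (hcomp p2 h) g) /\
  (forall (X : BMod) (h h' : hom X P),
      heq (hcomp p1 h) (hcomp p1 h') -> heq (hcomp p2 h) (hcomp p2 h') -> heq h h').

Definition is_coproduct (A B C : BMod) (i1 : hom A C) (i2 : hom B C) : Prop :=
  (forall (X : BMod) (f : hom A X) (g : hom B X),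
      exists h : hom C X, heq (hcomp h i1) f /\ heq (hcomp h i2) g) /\
  (forall (X : BMod) (h h' : hom C X),
      heq (hcomp h i1) (hcomp h' i1) -> heq (hcomp h i2) (hcomp h' i2) -> heq h h').

Definition is_equalizer (E A B : BMod) (f g : hom A B) (e : hom E A) : Prop :=
  heq (hcomp f e) (hcomp g e) /\
  (forall (X : BMod) (x : hom X A), heq (hcomp f x) (hcomp g x) ->
      exists h : hom X E, heq (hcomp e h) x) /\
  (forall (X : BMod) (h h' : hom X E), heq (hcomp e h) (hcomp e h') -> heq h h').

Definition is_coequalizer (A B Q : BMod) (f g : hom A B) (q : hom B Q) : Prop :=
  heq (hcomp q f) (hcomp q g) /\
  (forall (X : BMod) (x : hom B X), heq (hcomp x f) (hcomp x g) ->
      exists h : hom Q X, heq (hcomp h q) x) /\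
  (forall (X : BMod) (h h' : hom Q X), heq (hcomp h q) (hcomp h' q) -> heq h h').

Section Quot.
Variables (X : Type) (R : X -> X -> Prop).
Hypotheses (Rrefl : forall x, R x x) (Rsym : forall x y, R x y -> R y x)
  (Rtrans : forall x y z, R x y -> R y z -> R x z).

Definition quot : Type := {P : X -> Prop | exists x, P = R x}.
Definition cls (x : X) : quot := exist _ (R x) (ex_intro _ x eq_refl).
Definition rep (q : quot) : X :=
  proj1_sig (constructive_indefinite_description _ (proj2_sig q)).

Lemma rep_spec (q : quot) : proj1_sig q = R (rep q).
Proof.
  unfold rep; destruct (constructive_indefinite_description _ _); auto.
Qed.

Lemma cls_rep (q : quot) : cls (rep q) = q.
Proof.
  pose proof (rep_spec q) as H. revert H. generalize (rep q) as r.
  intros r H. destruct q as [P HP]; simpl in *.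
  unfold cls. subst P. f_equal. apply proof_irrelevance.
Qed.

Lemma cls_eq (x y : X) : R x y -> cls x = cls y.
Proof.
  intro Hxy. unfold cls.
  assert (E : R x = R y).
  { apply functional_extensionality; intro z; apply propositional_extensionality;
    split; eauto. }
  generalize (ex_intro (fun w => R x = R w) x eq_refl).
  generalize (ex_intro (fun w => R y = R w) y eq_refl).
  rewrite <- E. intros; f_equal; apply proof_irrelevance.
Qed.

Lemma rep_cls (x : X) : R (rep (cls x)) x.
Proof.
  pose proof (rep_spec (cls x)) as H; simpl in H.
  apply Rsym. rewrite H. apply Rrefl.
Qed.
End Quot.

Section Tensor.
Variables (A M : BMod).

(* the congruence on formal finite joins of pure tensors generated by the
   B-bilinearity relations *)
Inductive teq : list (A * M) -> list (A * M) -> Prop :=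
| teq_refl l : teq l l
| teq_sym l l' : teq l l' -> teq l' l
| teq_trans l l' l'' : teq l l' -> teq l' l'' -> teq l l''
| teq_cat l1 l2 l1' l2' : teq l1 l1' -> teq l2 l2' -> teq (l1 ++ l2) (l1' ++ l2')
| teq_comm l1 l2 : teq (l1 ++ l2) (l2 ++ l1)
| teq_idem l : teq (l ++ l) l
| teq_zl (m : M) : teq [(bzero, m)] []
| teq_zr (a : A) : teq [(a, bzero)] []
| teq_jl (a a' : A) (m : M) : teq [(bjoin a a', m)] [(a, m); (a', m)]
| teq_jr (a : A) (m m' : M) : teq [(a, bjoin m m')] [(a, m); (a, m')].

Definition tcar : Type := quot teq.
Definition tcls := @cls _ teq.
Definition trep := @rep _ teq.
Definition tjoin (x y : tcar) : tcar := tcls (trep x ++ trep y).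
Definition tzero : tcar := tcls [].

Lemma trep_cls l : teq (trep (tcls l)) l.
Proof. exact (rep_cls teq teq_refl teq_sym l). Qed.
Lemma tcls_eq l l' : teq l l' -> tcls l = tcls l'.
Proof. exact (cls_eq teq teq_sym teq_trans l l'). Qed.
Lemma tcls_rep x : tcls (trep x) = x.
Proof. apply cls_rep. Qed.

Lemma tjoinA x y z : tjoin x (tjoin y z) = tjoin (tjoin x y) z.
Proof.
  unfold tjoin. apply tcls_eq.
  eapply teq_trans. apply teq_cat. apply teq_refl. apply trep_cls.
  rewrite app_assoc. apply teq_cat. apply teq_sym, trep_cls. apply teq_refl.
Qed.
Lemma tjoinC x y : tjoin x y = tjoin y x.
Proof. unfold tjoin. apply tcls_eq, teq_comm. Qed.
Lemma tjoinI x : tjoin x x = x.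
Proof. unfold tjoin. rewrite <- (tcls_rep x) at 3. apply tcls_eq, teq_idem. Qed.
Lemma tjoin0 x : tjoin tzero x = x.
Proof.
  unfold tjoin, tzero. rewrite <- (tcls_rep x) at 2. apply tcls_eq.
  change (trep x) with ([] ++ trep x) at 2.
  apply teq_cat. apply trep_cls. apply teq_refl.
Qed.

Definition tensor : BMod := @Build_BMod tcar tjoin tzero tjoinA tjoinC tjoinI tjoin0.
End Tensor.

Section TensorMap.
Variables (A B M : BMod) (f : hom A B).
Let F (p : A * M) : B * M := (f (fst p), snd p).

Lemma teq_map l l' : teq A M l l' -> teq B M (map F l) (map F l').
Proof.
  induction 1; simpl; rewrite ?map_app.
  - apply teq_refl.
  - apply teq_sym; auto.
  - eapply teq_trans; eauto.
  - apply teq_cat; auto.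
  - apply teq_comm.
  - apply teq_idem.
  - unfold F; simpl; rewrite hom_zero; apply teq_zl.
  - apply teq_zr.
  - unfold F; simpl; rewrite hom_join; apply teq_jl.
  - apply teq_jr.
Qed.

Definition tmap_fun (x : tensor A M) : tensor B M := tcls B M (map F (trep x)).

Lemma tmap_join x y :
  tmap_fun (@bjoin (tensor A M) x y) = bjoin (tmap_fun x) (tmap_fun y).
Proof.
  unfold tmap_fun; simpl; unfold tjoin. apply tcls_eq.
  eapply teq_trans. apply teq_map, trep_cls. rewrite map_app.
  apply teq_cat; apply teq_sym, trep_cls.
Qed.

Lemma tmap_zero : tmap_fun bzero = bzero.
Proof.
  unfold tmap_fun; simpl; unfold tzero. apply tcls_eq.
  change (@nil (B * M)) with (map F []). apply teq_map, trep_cls.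
Qed.

Definition tmap : hom (tensor A M) (tensor B M) := @Build_hom (tensor A M) (tensor B M) tmap_fun tmap_join tmap_zero.
End TensorMap.

(** * Flatness: - (x) M is exact (preserves finite limits and finite colimits).
    Finite limits are generated by the terminal object, binary products and
    equalizers; dually for finite colimits. *)
Definition flat (M : BMod) : Prop :=
  (forall T : BMod, is_terminal T -> is_terminal (tensor T M)) /\
  (forall (A B P : BMod) (p1 : hom P A) (p2 : hom P B),
      is_product p1 p2 -> is_product (tmap M p1) (tmap M p2)) /\
  (forall (E A B : BMod) (f g : hom A B) (e : hom E A),
      is_equalizer f g e -> is_equalizer (tmap M f) (tmap M g) (tmap M e)) /\
  (forall I : BMod, is_initial I -> is_initial (tensor I M)) /\
  (forall (A B C : BMod) (i1 : hom A C) (i2 : hom B C),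
      is_coproduct i1 i2 -> is_coproduct (tmap M i1) (tmap M i2)) /\
  (forall (A B Q : BMod) (f g : hom A B) (q : hom B Q),
      is_coequalizer f g q -> is_coequalizer (tmap M f) (tmap M g) (tmap M q)).

Section FreeB.
Variables (S : Type) (le : S -> S -> Prop).

Definition fin_lower (L : S -> Prop) : Prop :=
  exists l : list S, forall x, L x <-> exists y, In y l /\ le x y.

Definition Bcar : Type := {L : S -> Prop | fin_lower L}.

Lemma Bunion_fin (L1 L2 : Bcar) : fin_lower (fun x => proj1_sig L1 x \/ proj1_sig L2 x).
Proof.
  destruct L1 as [L1 [l1 H1]], L2 as [L2 [l2 H2]]; simpl. exists (l1 ++ l2).
  intro x; rewrite H1, H2; split.
  - intros [[y [Hy Hl]] | [y [Hy Hl]]]; exists y; rewrite in_app_iff; auto.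
  - intros [y [Hy Hl]]; apply in_app_iff in Hy as [Hy|Hy]; eauto.
Qed.

Definition Bunion (L1 L2 : Bcar) : Bcar := exist _ _ (Bunion_fin L1 L2).

Lemma Bempty_fin : fin_lower (fun _ => False).
Proof. exists []; intro x; split; [tauto | intros [y [[] _]]]. Qed.

Definition Bempty : Bcar := exist _ _ Bempty_fin.

Lemma Bext (u v : Bcar) : (forall x, proj1_sig u x <-> proj1_sig v x) -> u = v.
Proof.
  destruct u as [u hu], v as [v hv]; simpl; intro H.
  assert (u = v) by (apply functional_extensionality; intro; apply propositional_extensionality; auto).
  subst; f_equal; apply proof_irrelevance.
Qed.

Lemma BunionA x y z : Bunion x (Bunion y z) = Bunion (Bunion x y) z.
Proof. apply Bext; simpl; tauto. Qed.
Lemma BunionC x y : Bunion x y = Bunion y x.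
Proof. apply Bext; simpl; tauto. Qed.
Lemma BunionI x : Bunion x x = x.
Proof. apply Bext; simpl; tauto. Qed.
Lemma Bunion0 x : Bunion Bempty x = x.
Proof. apply Bext; simpl; tauto. Qed.

Definition BFree : BMod := @Build_BMod Bcar Bunion Bempty BunionA BunionC BunionI Bunion0.
End FreeB.

From Stdlib Require Import List ClassicalEpsilon FunctionalExtensionality ProofIrrelevance.
Import ListNotations.
Set Implicit Arguments.

(** Tensoring with any B-module M is left adjoint to Hom(M, -), so it preserves
    all colimits; finite products in B-modules are biproducts, which every
    additive functor preserves.  The only real work is equalizers.  An equalizer
    is an injective map onto the equalizing set, and for M = B(S,<=) every
    tensor z in A (x) M is recovered from its coefficient function
    t |-> z(t) : S -> A as the join of z(s) (x) (down s) over finitely many s.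
    The coefficient map commutes with f (x) id, so it transports injectivity and
    the description of the image from A to A (x) M. *)

Definition ble (X : BMod) (x y : X) : Prop := bjoin x y = y.
Arguments ble {X} x y.

Fixpoint bigj (X : BMod) (xs : list X) : X :=
  match xs with [] => bzero | x :: r => bjoin x (@bigj X r) end.
Arguments bigj {X} xs.

Section JoinSemilattice.
Variable X : BMod.
Implicit Types x y z : X.

Lemma bjoin0r x : bjoin x bzero = x.
Proof. rewrite bjoinC; apply bjoin0. Qed.

Lemma ble_refl x : ble x x.
Proof. apply bjoinI. Qed.

Lemma ble_trans x y z : ble x y -> ble y z -> ble x z.
Proof. unfold ble; intros Hxy Hyz. rewrite <- Hyz, bjoinA, Hxy; reflexivity. Qed.

Lemma ble_antisym x y : ble x y -> ble y x -> x = y.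
Proof. unfold ble; intros Hxy Hyx. rewrite <- Hyx, bjoinC; auto. Qed.

Lemma ble0 x : ble bzero x.
Proof. apply bjoin0. Qed.

Lemma ble_join x y z : ble x z -> ble y z -> ble (bjoin x y) z.
Proof. unfold ble; intros Hx Hy. rewrite <- bjoinA, Hy, Hx; reflexivity. Qed.

Lemma ble_joinl x y : ble x (bjoin x y).
Proof. unfold ble. rewrite bjoinA, bjoinI; reflexivity. Qed.

Lemma ble_joinr x y : ble y (bjoin x y).
Proof. rewrite bjoinC; apply ble_joinl. Qed.

Lemma ble_join2 x y x' y' : ble x x' -> ble y y' -> ble (bjoin x y) (bjoin x' y').
Proof. intros; apply ble_join; eapply ble_trans; eauto using ble_joinl, ble_joinr. Qed.

Lemma bjoinACA x y x' y' : bjoin (bjoin x y) (bjoin x' y') = bjoin (bjoin x x') (bjoin y y').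
Proof. rewrite <- !bjoinA; f_equal; rewrite !bjoinA; f_equal; apply bjoinC. Qed.

Lemma bigj_cat (xs ys : list X) : bigj (xs ++ ys) = bjoin (bigj xs) (bigj ys).
Proof.
  induction xs as [|x xs IH]; simpl; [rewrite bjoin0 | rewrite IH, bjoinA]; reflexivity.
Qed.

Lemma bigj_le (xs : list X) y : (forall x, In x xs -> ble x y) -> ble (bigj xs) y.
Proof. induction xs; simpl; intros H; [apply ble0 | apply ble_join; auto]. Qed.

Lemma le_bigj (xs : list X) x : In x xs -> ble x (bigj xs).
Proof.
  induction xs as [|x' xs IH]; simpl; [intros []|intros [<-|H]]; [apply ble_joinl|].
  eapply ble_trans; [apply IH, H | apply ble_joinr].
Qed.

Lemma bigj_mono (I : Type) (F G : I -> X) (l : list I) :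
  (forall i, In i l -> ble (F i) (G i)) -> ble (bigj (map F l)) (bigj (map G l)).
Proof. induction l; simpl; intros H; [apply ble_refl | apply ble_join2; auto]. Qed.

Lemma bigj0 (xs : list X) : (forall x, In x xs -> x = bzero) -> bigj xs = bzero.
Proof. induction xs; simpl; intros H; auto. rewrite (H a), IHxs; auto. apply bjoinI. Qed.
End JoinSemilattice.

Lemma hom_bigj (A B : BMod) (h : hom A B) (xs : list A) : h (bigj xs) = bigj (map h xs).
Proof. induction xs; simpl; [apply hom_zero | rewrite hom_join, IHxs; auto]. Qed.

Lemma hom_ble (A B : BMod) (h : hom A B) x y : ble x y -> ble (h x) (h y).
Proof. unfold ble; intros H. rewrite <- hom_join, H; auto. Qed.

Lemma hom_ext (A B : BMod) (f g : hom A B) : heq f g -> f = g.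
Proof.
  destruct f as [f fj fz], g as [g gj gz]; unfold heq; simpl; intro H.
  assert (f = g) by (apply functional_extensionality; auto). subst g.
  f_equal; apply proof_irrelevance.
Qed.

Lemma hcompE (A B C : BMod) (g : hom B C) (f : hom A B) x : hcomp g f x = g (f x).
Proof. reflexivity. Qed.

Definition idh (A : BMod) : hom A A :=
  @Build_hom A A (fun x => x) (fun _ _ => eq_refl) eq_refl.

Definition zhom (A B : BMod) : hom A B :=
  @Build_hom A B (fun _ => bzero) (fun _ _ => eq_sym (bjoinI _ _)) eq_refl.

Section HomModule.
Variables (M X : BMod).

Definition hjoin (f g : hom M X) : hom M X.
Proof.
  refine (@Build_hom M X (fun m => bjoin (f m) (g m)) _ _).
  - intros x y; rewrite !hom_join; apply bjoinACA.
  - rewrite !hom_zero; apply bjoinI.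
Defined.

Lemma hjoinE f g m : hjoin f g m = bjoin (f m) (g m).
Proof. reflexivity. Qed.

Lemma hjoinA f g h : hjoin f (hjoin g h) = hjoin (hjoin f g) h.
Proof. apply hom_ext; intro; apply bjoinA. Qed.
Lemma hjoinC f g : hjoin f g = hjoin g f.
Proof. apply hom_ext; intro; apply bjoinC. Qed.
Lemma hjoinI f : hjoin f f = f.
Proof. apply hom_ext; intro; apply bjoinI. Qed.
Lemma hjoin0 f : hjoin (zhom M X) f = f.
Proof. apply hom_ext; intro; apply bjoin0. Qed.

Definition HomM : BMod := @Build_BMod (hom M X) hjoin (zhom M X) hjoinA hjoinC hjoinI hjoin0.
End HomModule.

Section FunModule.
Variables (S : Type) (A : BMod).

Definition fjoin (f g : S -> A) : S -> A := fun t => bjoin (f t) (g t).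

Lemma fjoinA f g h : fjoin f (fjoin g h) = fjoin (fjoin f g) h.
Proof. apply functional_extensionality; intro; apply bjoinA. Qed.
Lemma fjoinC f g : fjoin f g = fjoin g f.
Proof. apply functional_extensionality; intro; apply bjoinC. Qed.
Lemma fjoinI f : fjoin f f = f.
Proof. apply functional_extensionality; intro; apply bjoinI. Qed.
Lemma fjoin0 f : fjoin (fun _ => bzero) f = f.
Proof. apply functional_extensionality; intro; apply bjoin0. Qed.

Definition FunMod : BMod := @Build_BMod (S -> A) fjoin (fun _ => bzero) fjoinA fjoinC fjoinI fjoin0.

Lemma FunMod_bigj (fs : list FunMod) t : bigj fs t = bigj (map (fun f => f t) fs).
Proof. induction fs; simpl; auto. unfold fjoin; rewrite IHfs; auto. Qed.
End FunModule.

Definition fun_map (S : Type) (E A : BMod) (e : hom E A) : hom (FunMod S E) (FunMod S A).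
Proof.
  refine (@Build_hom (FunMod S E) (FunMod S A) (fun phi t => e (phi t)) _ _).
  - intros x y; apply functional_extensionality; intro t; apply hom_join.
  - apply functional_extensionality; intro t; apply hom_zero.
Defined.

Section PureTensors.
Variables (A M : BMod).

Definition pt (a : A) (m : M) : tensor A M := tcls A M [(a, m)].

Lemma tjoin_cls l1 l2 :
  @bjoin (tensor A M) (tcls A M l1) (tcls A M l2) = tcls A M (l1 ++ l2).
Proof. apply tcls_eq, teq_cat; apply trep_cls. Qed.

Lemma tcls_bigj l : tcls A M l = bigj (map (fun p => pt (fst p) (snd p)) l).
Proof.
  induction l as [|[a m] l IH]; [reflexivity|].
  change (tcls A M ((a, m) :: l) = bjoin (pt a m) (bigj (map (fun p => pt (fst p) (snd p)) l))).
  rewrite <- IH; unfold pt; rewrite tjoin_cls; reflexivity.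
Qed.

Lemma tensorE (z : tensor A M) : z = bigj (map (fun p => pt (fst p) (snd p)) (trep z)).
Proof. rewrite <- tcls_bigj; symmetry; apply tcls_rep. Qed.

Lemma tensor_hom_ext (X : BMod) (h h' : hom (tensor A M) X) :
  (forall a m, h (pt a m) = h' (pt a m)) -> heq h h'.
Proof.
  intros H z. rewrite (tensorE z), !hom_bigj, !map_map. f_equal; apply map_ext; auto.
Qed.

Lemma pt_joinl a a' m : pt (bjoin a a') m = bjoin (pt a m) (pt a' m).
Proof. unfold pt; rewrite tjoin_cls; apply tcls_eq, teq_jl. Qed.
Lemma pt_joinr a m m' : pt a (bjoin m m') = bjoin (pt a m) (pt a m').
Proof. unfold pt; rewrite tjoin_cls; apply tcls_eq, teq_jr. Qed.
Lemma pt0l m : pt bzero m = bzero.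
Proof. apply tcls_eq, teq_zl. Qed.
Lemma pt0r a : pt a bzero = bzero.
Proof. apply tcls_eq, teq_zr. Qed.

Definition ptl (m : M) : hom A (tensor A M) :=
  @Build_hom A (tensor A M) (fun a => pt a m) (fun a a' => pt_joinl a a' m) (pt0l m).
Definition ptr (a : A) : hom M (tensor A M) :=
  @Build_hom M (tensor A M) (fun m => pt a m) (fun m m' => pt_joinr a m m') (pt0r a).

Lemma pt_bigjl xs m : pt (bigj xs) m = bigj (map (fun a => pt a m) xs).
Proof. exact (hom_bigj (ptl m) xs). Qed.
Lemma pt_bigjr a xs : pt a (bigj xs) = bigj (map (fun m => pt a m) xs).
Proof. exact (hom_bigj (ptr a) xs). Qed.
Lemma pt_blel a a' m : ble a a' -> ble (pt a m) (pt a' m).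
Proof. exact (@hom_ble _ _ (ptl m) a a'). Qed.
Lemma pt_bler a m m' : ble m m' -> ble (pt a m) (pt a m').
Proof. exact (@hom_ble _ _ (ptr a) m m'). Qed.

Section Adjunction.
Variable X : BMod.

Definition curry_at (h : hom (tensor A M) X) (a : A) : hom M X.
Proof.
  refine (@Build_hom M X (fun m => h (pt a m)) _ _).
  - intros; rewrite pt_joinr, hom_join; auto.
  - rewrite pt0r, hom_zero; auto.
Defined.

Definition curry (h : hom (tensor A M) X) : hom A (HomM M X).
Proof.
  refine (@Build_hom A (HomM M X) (curry_at h) _ _).
  - intros; apply hom_ext; intro m; simpl; rewrite pt_joinl, hom_join; auto.
  - apply hom_ext; intro m; simpl; rewrite pt0l, hom_zero; auto.
Defined.

Variable k : hom A (HomM M X).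

Definition uncurry_list (l : list (A * M)) : X :=
  bigj (map (fun p => @hfun M X (k (fst p)) (snd p)) l).

Lemma uncurry_list_cat l1 l2 :
  uncurry_list (l1 ++ l2) = bjoin (uncurry_list l1) (uncurry_list l2).
Proof. unfold uncurry_list; rewrite map_app, bigj_cat; auto. Qed.

Lemma uncurry_list_teq l l' : teq A M l l' -> uncurry_list l = uncurry_list l'.
Proof.
  induction 1; rewrite ?uncurry_list_cat; try congruence;
    unfold uncurry_list; simpl; rewrite ?bjoin0r.
  - apply bjoinC.
  - apply bjoinI.
  - rewrite (hom_zero k); reflexivity.
  - apply (hom_zero (k a)).
  - rewrite (hom_join k); reflexivity.
  - apply (hom_join (k a)).
Qed.

Lemma uncurry_join (x y : tensor A M) :
  uncurry_list (trep (@bjoin (tensor A M) x y)) = bjoin (uncurry_list (trep x)) (uncurry_list (trep y)).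
Proof. simpl; unfold tjoin; rewrite (uncurry_list_teq (trep_cls A M _)), uncurry_list_cat; auto. Qed.

Lemma uncurry_zero : uncurry_list (trep (bzero : tensor A M)) = bzero.
Proof. simpl; unfold tzero; rewrite (uncurry_list_teq (trep_cls A M _)); auto. Qed.

Definition uncurry : hom (tensor A M) X :=
  @Build_hom (tensor A M) X (fun z => uncurry_list (trep z)) uncurry_join uncurry_zero.

Lemma uncurry_pt a m : uncurry (pt a m) = @hfun M X (k a) m.
Proof. simpl; unfold pt; rewrite (uncurry_list_teq (trep_cls A M _)); apply bjoin0r. Qed.
End Adjunction.
End PureTensors.

Arguments pt {A M} a m.
Arguments curry {A M X} h.
Arguments uncurry {A M X} k.

Lemma curry_inj (A M X : BMod) (h h' : hom (tensor A M) X) :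
  heq (curry h) (curry h') -> heq h h'.
Proof.
  intro H; apply tensor_hom_ext; intros a m.
  exact (f_equal (fun phi : hom M X => phi m) (H a)).
Qed.

Section TensorMap.
Variable M : BMod.

Lemma tmap_pt (A B : BMod) (f : hom A B) a m : tmap M f (pt a m) = pt (f a) m.
Proof. apply tcls_eq, (teq_map f (trep_cls A M [(a, m)])). Qed.

Lemma tmap_heq (A B : BMod) (f g : hom A B) : heq f g -> heq (tmap M f) (tmap M g).
Proof. intro H; apply tensor_hom_ext; intros; rewrite !tmap_pt, H; reflexivity. Qed.

Lemma tmap_comp (A B C : BMod) (g : hom B C) (f : hom A B) :
  heq (tmap M (hcomp g f)) (hcomp (tmap M g) (tmap M f)).
Proof. apply tensor_hom_ext; intros; rewrite hcompE, !tmap_pt; reflexivity. Qed.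

Lemma tmap_idh (A : BMod) : heq (tmap M (idh A)) (idh _).
Proof. apply tensor_hom_ext; intros; rewrite tmap_pt; reflexivity. Qed.

Lemma tmap_zhom (A B : BMod) : heq (tmap M (zhom A B)) (zhom _ _).
Proof. apply tensor_hom_ext; intros; rewrite tmap_pt; apply pt0l. Qed.

Lemma tmap_hjoin (A B : BMod) (f g : hom A B) :
  heq (tmap M (hjoin f g)) (hjoin (tmap M f) (tmap M g)).
Proof. apply tensor_hom_ext; intros; rewrite hjoinE, !tmap_pt; apply pt_joinl. Qed.

Lemma tmap_comp_heq (A B C : BMod) (g : hom B C) (f : hom A B) (h : hom A C) :
  heq (hcomp g f) h -> heq (hcomp (tmap M g) (tmap M f)) (tmap M h).
Proof. intros H z; rewrite <- (tmap_comp g f z); apply tmap_heq, H. Qed.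
End TensorMap.

Lemma terminal_trivial (T : BMod) : is_terminal T -> forall x : T, x = bzero.
Proof. intros HT x; exact (proj2 (HT T) (idh T) (zhom T T) x). Qed.

Lemma trivial_terminal (T : BMod) : (forall x : T, x = bzero) -> is_terminal T.
Proof.
  intros H X; split; [constructor; exact (zhom X T)|].
  intros f g x; rewrite (H (f x)), (H (g x)); auto.
Qed.

Lemma initial_trivial (I : BMod) : is_initial I -> forall x : I, x = bzero.
Proof. intros HI x; exact (proj2 (HI I) (idh I) (zhom I I) x). Qed.

Lemma trivial_initial (I : BMod) : (forall x : I, x = bzero) -> is_initial I.
Proof.
  intros H X; split; [constructor; exact (zhom I X)|].
  intros f g x; rewrite (H x), !hom_zero; auto.
Qed.

Lemma tensor_trivial (T M : BMod) : (forall x : T, x = bzero) -> forall z : tensor T M, z = bzero.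
Proof.
  intros H z; rewrite (tensorE z); apply bigj0.
  intros x Hx; apply in_map_iff in Hx as [[a m] [<- _]]; simpl; rewrite (H a); apply pt0l.
Qed.

(** * Products are biproducts *)

Definition biproduct (A B P : BMod) (p1 : hom P A) (p2 : hom P B) (i1 : hom A P) (i2 : hom B P) :=
  heq (hcomp p1 i1) (idh A) /\ heq (hcomp p2 i1) (zhom A B) /\
  heq (hcomp p1 i2) (zhom B A) /\ heq (hcomp p2 i2) (idh B) /\
  heq (hjoin (hcomp i1 p1) (hcomp i2 p2)) (idh P).

Lemma product_biproduct (A B P : BMod) (p1 : hom P A) (p2 : hom P B) :
  is_product p1 p2 -> exists i1 i2, biproduct p1 p2 i1 i2.
Proof.
  intros [Hex Hun].
  destruct (Hex A (idh A) (zhom A B)) as [i1 [E11 E12]].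
  destruct (Hex B (zhom B A) (idh B)) as [i2 [E21 E22]].
  exists i1, i2; repeat split; auto.
  apply (Hun P); intro y; rewrite !hcompE, hjoinE, hom_join, !hcompE.
  - rewrite (E11 (p1 y) : p1 (i1 _) = _), (E21 (p2 y) : p1 (i2 _) = _); apply bjoin0r.
  - rewrite (E12 (p1 y) : p2 (i1 _) = _), (E22 (p2 y) : p2 (i2 _) = _); apply bjoin0.
Qed.

Lemma biproduct_product (A B P : BMod) (p1 : hom P A) (p2 : hom P B) i1 i2 :
  biproduct p1 p2 i1 i2 -> is_product p1 p2.
Proof.
  intros (E11 & E12 & E21 & E22 & D); split.
  - intros X f g; exists (hjoin (hcomp i1 f) (hcomp i2 g)); split; intro x;
      rewrite !hcompE, hjoinE, hom_join, !hcompE, <- !(hcompE _ _ (f x)), <- !(hcompE _ _ (g x)).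
    + rewrite E11, E21; apply bjoin0r.
    + rewrite E12, E22; apply bjoin0.
  - intros X h h' H1 H2 x; rewrite <- (D (h x) : _ = h x), <- (D (h' x) : _ = h' x), !hjoinE, !hcompE.
    rewrite <- !(hcompE p1), <- !(hcompE p2), H1, H2; reflexivity.
Qed.

Lemma tmap_biproduct (M A B P : BMod) (p1 : hom P A) (p2 : hom P B) i1 i2 :
  biproduct p1 p2 i1 i2 ->
  biproduct (tmap M p1) (tmap M p2) (tmap M i1) (tmap M i2).
Proof.
  intros (E11 & E12 & E21 & E22 & D); repeat split; intro z.
  - rewrite (tmap_comp_heq E11 z); apply tmap_idh.
  - rewrite (tmap_comp_heq E12 z); apply tmap_zhom.
  - rewrite (tmap_comp_heq E21 z); apply tmap_zhom.
  - rewrite (tmap_comp_heq E22 z); apply tmap_idh.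
  - rewrite hjoinE, <- (tmap_comp i1 p1 z), <- (tmap_comp i2 p2 z).
    rewrite <- hjoinE, <- (tmap_hjoin (hcomp i1 p1) (hcomp i2 p2) z), (tmap_heq D z).
    apply tmap_idh.
Qed.

(** * Colimits, through the adjunction *)

Section Colimits.
Variable M : BMod.

Lemma curry_tmap (A C X : BMod) (h : hom (tensor C M) X) (f : hom A C) a m :
  @hfun M X (hcomp (curry h) f a) m = hcomp h (tmap M f) (pt a m).
Proof. rewrite !hcompE, tmap_pt; reflexivity. Qed.

Lemma uncurry_tmap (A C X : BMod) (k : hom C (HomM M X)) (f : hom A C) a m :
  hcomp (uncurry k) (tmap M f) (pt a m) = @hfun M X (hcomp k f a) m.
Proof. rewrite hcompE, tmap_pt, uncurry_pt; reflexivity. Qed.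

Lemma coproduct_pres (A B C : BMod) (i1 : hom A C) (i2 : hom B C) :
  is_coproduct i1 i2 -> is_coproduct (tmap M i1) (tmap M i2).
Proof.
  intros [Hex Hun]; split.
  - intros X f g; destruct (Hex (HomM M X) (curry f) (curry g)) as [k [Hk1 Hk2]].
    exists (uncurry k); split; apply tensor_hom_ext; intros a m; rewrite uncurry_tmap.
    + exact (f_equal (fun phi : hom M X => phi m) (Hk1 a)).
    + exact (f_equal (fun phi : hom M X => phi m) (Hk2 a)).
  - intros X h h' H1 H2; apply curry_inj, (Hun (HomM M X)); intro a;
      apply hom_ext; intro m; rewrite !curry_tmap; [apply H1 | apply H2].
Qed.

Lemma coequalizer_pres (A B Q : BMod) (f g : hom A B) (q : hom B Q) :
  is_coequalizer f g q -> is_coequalizer (tmap M f) (tmap M g) (tmap M q).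
Proof.
  intros [H0 [Hex Hun]]; split; [|split].
  - intro z; rewrite <- (tmap_comp q f z), <- (tmap_comp q g z); apply tmap_heq, H0.
  - intros X x Hx; destruct (Hex (HomM M X) (curry x)) as [k Hk].
    + intro a; apply hom_ext; intro m; rewrite !curry_tmap; apply Hx.
    + exists (uncurry k); apply tensor_hom_ext; intros b m.
      rewrite hcompE, tmap_pt, uncurry_pt; exact (f_equal (fun phi : hom M X => phi m) (Hk b)).
  - intros X h h' H1; apply curry_inj, (Hun (HomM M X)); intro a;
      apply hom_ext; intro m; rewrite !curry_tmap; apply H1.
Qed.
End Colimits.

(** * Equalizers are injections onto the equalizing set *)

Lemma orbA (x y z : bool) : orb x (orb y z) = orb (orb x y) z.
Proof. destruct x, y, z; reflexivity. Qed.
Lemma orbI (x : bool) : orb x x = x.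
Proof. destruct x; reflexivity. Qed.
Lemma orb0 (x : bool) : orb false x = x.
Proof. reflexivity. Qed.

(* the free B-module on one generator: morphisms out of it pick elements *)
Definition BoolM : BMod := @Build_BMod bool orb false orbA Bool.orb_comm orbI orb0.

Definition point (Y : BMod) (y : Y) : hom BoolM Y.
Proof.
  refine (@Build_hom BoolM Y (fun b : bool => if b then y else bzero) _ _); [|reflexivity].
  intros [|] [|]; symmetry; simpl; auto using bjoinI, bjoin0, bjoin0r.
Defined.

Section Equalizers.
Variables (E A B : BMod) (f g : hom A B) (e : hom E A).

Lemma equalizer_inj : is_equalizer f g e -> forall x y, e x = e y -> x = y.
Proof.
  intros (_ & _ & Hun) x y Hxy; refine (Hun BoolM (point E x) (point E y) _ true).
  intros [|]; simpl; auto.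
Qed.

Lemma equalizer_image : is_equalizer f g e -> forall a, f a = g a -> exists x, e x = a.
Proof.
  intros (_ & Hex & _) a Ha; destruct (Hex BoolM (point A a)) as [h Hh].
  - intros [|]; simpl; rewrite ?hom_zero; auto.
  - exists (h true); exact (Hh true).
Qed.

Lemma inj_image_equalizer :
  heq (hcomp f e) (hcomp g e) -> (forall x y, e x = e y -> x = y) ->
  (forall a, f a = g a -> exists x, e x = a) -> is_equalizer f g e.
Proof.
  intros H0 Hinj Himg; split; [exact H0|split].
  - intros X x Hx.
    assert (Hlift : forall u, exists w, e w = x u) by (intro u; apply Himg, Hx).
    set (lift u := proj1_sig (constructive_indefinite_description _ (Hlift u))).
    assert (Hl : forall u, e (lift u) = x u)
      by (intro u; exact (proj2_sig (constructive_indefinite_description _ (Hlift u)))).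
    unshelve eexists (@Build_hom X E lift _ _); [| |exact Hl].
    + intros u v; apply Hinj; rewrite hom_join, !Hl, hom_join; reflexivity.
    + apply Hinj; rewrite Hl, !hom_zero; reflexivity.
  - intros X h h' Hh x; apply Hinj, Hh.
Qed.
End Equalizers.

(** * Coefficients of tensors with B(S, <=) *)

Section FreeModule.
Variables (S : Type) (le : S -> S -> Prop).
Hypotheses (le_refl : forall x, le x x) (le_trans : forall x y z, le x y -> le y z -> le x z).
Local Notation BS := (BFree le).

Definition down (s : S) : BS.
Proof.
  refine (exist _ (fun x => le x s) _).
  exists [s]; intro x; split; [intro; exists s; simpl; auto | intros [y [[<-|[]] H]]; auto].
Defined.

Definition gens (L : BS) : list S :=
  proj1_sig (constructive_indefinite_description _ (proj2_sig L)).

Lemma gens_spec (L : BS) x : proj1_sig L x <-> exists y, In y (gens L) /\ le x y.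
Proof. exact (proj2_sig (constructive_indefinite_description _ (proj2_sig L)) x). Qed.

Lemma BFree_lower (L : BS) x y : proj1_sig L y -> le x y -> proj1_sig L x.
Proof. intros Hy Hxy; apply gens_spec in Hy as [z [Hz Hyz]]; apply gens_spec; eauto. Qed.

Lemma down_ble (L : BS) s : proj1_sig L s -> ble (down s) L.
Proof. intro Hs; apply Bext; simpl; intro x; split; [intros [H|H]; eauto using BFree_lower | auto]. Qed.

Lemma bigj_down ys x :
  proj1_sig (@bigj BS (map down ys)) x <-> exists y, In y ys /\ le x y.
Proof.
  induction ys as [|y ys IH]; simpl; [split; [tauto | intros [_ [[] _]]]|].
  rewrite IH; split; [intros [H|[z [H1 H2]]]; eauto | intros [z [[<-|H1] H2]]; eauto].
Qed.

Lemma bigj_down_gens (L : BS) : L = @bigj BS (map down (gens L)).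
Proof. apply Bext; intro x; rewrite bigj_down, gens_spec; tauto. Qed.

Section Coefficients.
Variable A : BMod.

Definition indic (a : A) (L : BS) : S -> A :=
  fun t => if excluded_middle_informative (proj1_sig L t) then a else bzero.

Lemma indic_in a L t : proj1_sig L t -> indic a L t = a.
Proof. unfold indic; destruct excluded_middle_informative; tauto. Qed.

Lemma indic_out a L t : ~ proj1_sig L t -> indic a L t = bzero.
Proof. unfold indic; destruct excluded_middle_informative; tauto. Qed.

Definition indic_hom (a : A) : hom BS (FunMod S A).
Proof.
  refine (@Build_hom BS (FunMod S A) (indic a) _ _).
  - intros L1 L2; apply functional_extensionality; intro t.
    unfold indic; simpl; unfold fjoin.
    destruct (excluded_middle_informative (proj1_sig L1 t \/ proj1_sig L2 t)),
      (excluded_middle_informative (proj1_sig L1 t)),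
      (excluded_middle_informative (proj1_sig L2 t));
      try tauto; symmetry; auto using bjoinI, bjoin0, bjoin0r.
  - apply functional_extensionality; intro t; apply indic_out; auto.
Defined.

Definition indic_bihom : hom A (HomM BS (FunMod S A)).
Proof.
  refine (@Build_hom A (HomM BS (FunMod S A)) indic_hom _ _);
    [intros a a'|]; apply hom_ext; intro L; apply functional_extensionality; intro t;
    unfold indic; simpl; unfold fjoin, indic;
    destruct (excluded_middle_informative (proj1_sig L t)); auto using eq_sym, bjoinI.
Defined.

(** [coef z t] is the coefficient of [z] at [t]: the join of the [a] over the
    summands [a (x) L] of [z] with [t] in [L]. *)
Definition coef : hom (tensor A BS) (FunMod S A) := uncurry indic_bihom.

Lemma coef_pt a L : coef (pt a L) = indic a L.
Proof. apply uncurry_pt. Qed.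

Lemma coefE z t : coef z t = bigj (map (fun p => indic (fst p) (snd p) t) (trep z)).
Proof. simpl; unfold uncurry_list; rewrite FunMod_bigj, map_map; reflexivity. Qed.

Definition support (z : tensor A BS) : list S := flat_map (fun p => gens (snd p)) (trep z).

Definition coef_sum (z : tensor A BS) (P : list S) : tensor A BS :=
  bigj (map (fun s => pt (coef z s) (down s)) P).

Lemma ble_coef_sum z P : incl (support z) P -> ble z (coef_sum z P).
Proof.
  intro HP; rewrite (tensorE z) at 1; apply bigj_le; intros x Hx.
  apply in_map_iff in Hx as [[a L] [<- Hin]]; simpl.
  rewrite (bigj_down_gens L), pt_bigjr, map_map; apply bigj_le; intros x Hx.
  apply in_map_iff in Hx as [y [<- Hy]].
  assert (HyL : proj1_sig L y) by (apply gens_spec; eauto).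
  apply ble_trans with (pt (coef z y) (down y)).
  - apply pt_blel; rewrite coefE, <- (indic_in a _ _ HyL).
    apply le_bigj, in_map_iff; exists (a, L); auto.
  - apply le_bigj, in_map_iff; exists y; split; auto.
    apply HP, in_flat_map; exists (a, L); auto.
Qed.

Lemma coef_sum_ble z P : ble (coef_sum z P) z.
Proof.
  apply bigj_le; intros x Hx; apply in_map_iff in Hx as [s [<- _]].
  rewrite coefE, pt_bigjl, map_map.
  set (l := trep z); rewrite (tensorE z) at 1; subst l.
  apply bigj_mono; intros [a L] _; simpl.
  destruct (classic (proj1_sig L s)) as [H|H].
  - rewrite (indic_in a _ _ H); apply pt_bler, down_ble, H.
  - rewrite (indic_out a _ _ H), pt0l; apply ble0.
Qed.

Lemma coef_sumE z P : incl (support z) P -> coef_sum z P = z.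
Proof. intro HP; apply ble_antisym; [apply coef_sum_ble | apply ble_coef_sum, HP]. Qed.

Lemma coef_inj z z' : (forall t, coef z t = coef z' t) -> z = z'.
Proof.
  intro Ht; set (P := support z ++ support z').
  rewrite <- (coef_sumE z (P := P)), <- (coef_sumE z' (P := P)) by
    (intros ? ?; apply in_or_app; auto).
  unfold coef_sum; f_equal; apply map_ext; intro s; rewrite Ht; reflexivity.
Qed.
End Coefficients.

Lemma coef_tmap (E A : BMod) (e : hom E A) z t : coef A (tmap BS e z) t = e (coef E z t).
Proof.
  enough (H : heq (hcomp (coef A) (tmap BS e)) (hcomp (fun_map S e) (coef E)))
    by exact (f_equal (fun phi => phi t) (H z)).
  apply tensor_hom_ext; intros a L; rewrite !hcompE, tmap_pt.
  change (coef A (pt (e a) L) = (fun u => e (coef E (pt a L) u))).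
  rewrite !coef_pt; apply functional_extensionality; intro u.
  destruct (classic (proj1_sig L u)) as [H|H];
    [rewrite !indic_in | rewrite !indic_out, hom_zero]; auto.
Qed.

Lemma tmap_inj (E A : BMod) (e : hom E A) :
  (forall x y, e x = e y -> x = y) -> forall z z', tmap BS e z = tmap BS e z' -> z = z'.
Proof.
  intros Hinj z z' Hz; apply coef_inj; intro t; apply Hinj.
  rewrite <- !coef_tmap, Hz; reflexivity.
Qed.

Lemma tmap_image (E A B : BMod) (f g : hom A B) (e : hom E A) :
  (forall a, f a = g a -> exists x, e x = a) ->
  forall z, tmap BS f z = tmap BS g z -> exists w, tmap BS e w = z.
Proof.
  intros Himg z Hz.
  assert (Hlift : forall t, exists x, e x = coef A z t)
    by (intro t; apply Himg; rewrite <- !coef_tmap, Hz; reflexivity).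
  set (lift t := proj1_sig (constructive_indefinite_description _ (Hlift t))).
  exists (bigj (map (fun s => pt (lift s) (down s)) (support z))).
  rewrite hom_bigj, map_map; transitivity (coef_sum z (support z));
    [|apply coef_sumE, incl_refl].
  unfold coef_sum; f_equal; apply map_ext; intro s; rewrite tmap_pt; f_equal.
  exact (proj2_sig (constructive_indefinite_description _ (Hlift s))).
Qed.

Lemma equalizer_pres (E A B : BMod) (f g : hom A B) (e : hom E A) :
  is_equalizer f g e -> is_equalizer (tmap BS f) (tmap BS g) (tmap BS e).
Proof.
  intro H; apply inj_image_equalizer.
  - intro z; rewrite <- (tmap_comp f e z), <- (tmap_comp g e z).
    apply tmap_heq, (proj1 H).
  - apply tmap_inj, (equalizer_inj H).
  - apply tmap_image, (equalizer_image H).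
Qed.
End FreeModule.

Theorem mainTheorem10 (S : Type) (le : S -> S -> Prop)
  (le_refl : forall x, le x x)
  (le_antisym : forall x y, le x y -> le y x -> x = y)
  (le_trans : forall x y z, le x y -> le y z -> le x z) :
  flat (BFree le).
Proof.
  split; [|split; [|split; [|split; [|split]]]].
  - intros T0 HT; apply trivial_terminal, tensor_trivial, terminal_trivial, HT.
  - intros A B P p1 p2 HP; destruct (product_biproduct HP) as (i1 & i2 & Hb).
    exact (biproduct_product (tmap_biproduct _ Hb)).
  - apply (equalizer_pres _ le_refl le_trans).
  - intros I0 HI; apply trivial_initial, tensor_trivial, initial_trivial, HI.
  - apply coproduct_pres.
  - apply coequalizer_pres.
Qed.
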